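(* Let $N\ge2$, $d\ge1$, let $S\subset\mathbb{Z}_N^d$ be a nonempty Salem set at level $\Lambda_{\text{Salem}}>0$, and let $f:\mathbb{Z}_N^d\to\mathbb{C}$ be supported in $E\subset\mathbb{Z}_N^d$. Suppose $$|E|\cdot|S|^{3/4}<\frac12\,N^d\sqrt{\frac{1-\mathrm{dens}(S)}{\Lambda_{\text{Salem}}}},\qquad \mathrm{dens}(S)=N^{-d}|S|.$$ Then $f$ is uniquely determined by the values $\hat f(m)$, $m\notin S$, among signals with at most $|E|$ nonzero entries: if $g:\mathbb{Z}_N^d\to\mathbb{C}$ satisfies $|\{x:g(x)\ne0\}|\le|E|$ and $\hat g(m)=\hat f(m)$ for all $m\notin S$, then $g=f$.
   Context: $\chi(t)=e^{2\pi i t/N}$, $\hat f(m)=N^{-d}\sum_{x\in\mathbb{Z}_N^d}\chi(-x\cdot m)f(x)$. Sets are identified with indicator functions, so $\hat S(z)=N^{-d}\sum_{x\in S}\chi(-x\cdot z)$. A set $S\subset\mathbb{Z}_N^d$ is a Salem set at level $\Lambda_{\text{Salem}}$ if $|\hat S(z)|\le\Lambda_{\text{Salem}}N^{-d}|S|^{1/2}$ for all $z\ne0$. The set $S$ is the set of unobserved frequencies. *)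

From HB Require Import structures.
From mathcomp Require Import all_boot all_order all_algebra.
From mathcomp Require Import reals trigo exp.
From mathcomp Require Import complex.

Set Implicit Arguments.
Unset Strict Implicit.
Unset Printing Implicit Defensive.

Import Order.TTheory GRing.Theory Num.Theory.
Local Open Scope ring_scope.
Local Open Scope complex_scope.

(* Points of Z_N^d: functions 'I_d -> 'I_N (residues 0..N-1 of each coordinate). *)
Definition pt (N d : nat) := {ffun 'I_d -> 'I_N}.

(* x . m, computed on representatives in nat (chi only depends on it mod N). *)
Definition dotp (N d : nat) (x m : pt N d) : nat :=
  (\sum_(i < d) (nat_of_ord (x i)) * (nat_of_ord (m i)))%N.

Definition chi (R : realType) (N : nat) (t : R) : R[i] :=
  (cos (2 * pi * t / N%:R)) +i* (sin (2 * pi * t / N%:R)).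

Definition fhat (R : realType) (N d : nat) (f : pt N d -> R[i]) (m : pt N d) : R[i] :=
  (N%:R ^+ d)^-1 * \sum_(x : pt N d) chi N (- ((dotp x m)%:R : R)) * f x.

Definition indic (R : realType) (N d : nat) (S : {set pt N d}) : pt N d -> R[i] :=
  fun x => if x \in S then 1 else 0.

Definition salem (R : realType) (N d : nat) (S : {set pt N d}) (L : R) : Prop :=
  forall z : pt N d, (exists i, nat_of_ord (z i) != 0%N) ->
    `|fhat (indic R S) z| <= (L * (N%:R ^+ d)^-1 * Num.sqrt (#|S|%:R))%:C.

Definition dens (R : realType) (N d : nat) (S : {set pt N d}) : R :=
  (N%:R ^+ d)^-1 * #|S|%:R.

From HB Require Import structures.
From mathcomp Require Import all_boot all_order all_algebra.
From mathcomp Require Import reals trigo exp.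
From mathcomp Require Import complex.
From mathcomp Require Import ring lra zify.

(* Put h = g - f: its Fourier transform vanishes off S and it has at most 2|E|
   nonzero entries.  Evaluate Fourier inversion at a point x0 where |h| is
   maximal.  Restricted to the spectrum S it gives the uncertainty principle
   N^d <= |S| |supp h|.  Rewritten as the convolution
   h(x0) = sum_y h(y) \hat{1_S}(y - x0), whose kernel equals dens(S) at y = x0
   and is bounded by the Salem level elsewhere, it gives
   1 - dens(S) <= |supp h| L N^-d |S|^(1/2).  Together with |supp h| <= 2|E|
   the two bounds contradict the size hypothesis unless h = 0. *)

Set Implicit Arguments.
Unset Strict Implicit.
Unset Printing Implicit Defensive.

Import Order.TTheory GRing.Theory Num.Theory.
Local Open Scope ring_scope.
Local Open Scope complex_scope.

Lemma ffun_neq_exists (aT : finType) (rT : eqType) (f g : {ffun aT -> rT}) :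
  f != g -> exists i, f i != g i.
Proof.
move=> fg; apply/existsP; apply: contraR fg; rewrite negb_exists => /forallP fg.
by apply/eqP/ffunP => i; apply/eqP/negPn.
Qed.

Lemma exists_real_max (R : numDomainType) (T : finType) (F : T -> R) (t : T) :
  (forall x, F x \is Num.real) -> exists x0, forall y, F y <= F x0.
Proof.
move=> F_real; have [x0 _ F_le] := @real_arg_maxP R T t xpredT F isT (fun x _ => F_real x).
by exists x0 => y; apply: F_le.
Qed.

Lemma card_supp_subr (T : finType) (V : zmodType) (g f : T -> V) :
  (#|[set y | (g y - f y != 0)%R]| <= #|[set y | g y != 0%R]| + #|[set y | f y != 0%R]|)%N.
Proof.
apply: (@leq_trans #|[set y | g y != 0%R] :|: [set y | f y != 0%R]|).
  apply/subset_leq_card/subsetP => y.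
  rewrite !inE; apply: contraR; rewrite negb_or !negbK.
  by case/andP=> /eqP-> /eqP->; rewrite subrr.
by rewrite cardsU leq_subr.
Qed.

Lemma fhatB (R : realType) (N d : nat) (g f : pt N d -> R[i]) (m : pt N d) :
  fhat (fun y => g y - f y) m = fhat g m - fhat f m.
Proof.
rewrite /fhat -mulrBr -sumrB; congr (_ * _).
by apply: eq_bigr => y _; rewrite mulrBr.
Qed.

Section Characters.
Variables (R : realType) (N : nat).
Hypothesis N_gt0 : (0 < N)%N.

Lemma chi0 : chi N (0 : R) = 1.
Proof. by rewrite /chi mulr0 mul0r cos0 sin0. Qed.

Lemma chiD (a b : R) : chi N (a + b) = chi N a * chi N b.
Proof.
rewrite /chi.
have -> : 2 * pi * (a + b) / N%:R = 2 * pi * a / N%:R + 2 * pi * b / N%:R.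
  by rewrite mulrDr mulrDl.
rewrite cosD sinD; congr (_ +i* _); ring.
Qed.

Lemma normr_chi (t : R) : `|chi N t| = 1.
Proof. by rewrite normc_def /= cos2Dsin2 sqrtr1. Qed.

Lemma chi_sum (I : finType) (F : I -> R) :
  chi N (\sum_i F i) = \prod_i chi N (F i).
Proof. exact: (big_morph _ chiD chi0). Qed.

Lemma chiM_natr (c : R) (j : nat) : chi N (c * j%:R) = chi N c ^+ j.
Proof.
elim: j => [|j IHj]; first by rewrite mulr0 chi0.
by rewrite mulrSr mulrDr mulr1 chiD IHj exprSr.
Qed.

Lemma chi_periodic (t : R) (k : nat) : chi N (t + k%:R * N%:R) = chi N t.
Proof.
have N_neq0 : (N%:R : R) != 0 by rewrite pnatr_eq0 -lt0n.
rewrite /chi.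
have -> : 2 * pi * (t + k%:R * N%:R) / N%:R = 2 * pi * t / N%:R + pi *+ 2 *+ k.
  by rewrite -mulr_natl mulr2n; field.
by rewrite (periodicn (@cosD2pi R)) (periodicn (@sinD2pi R)).
Qed.

Lemma chi_periodicN (t : R) (k : nat) : chi N (t - k%:R * N%:R) = chi N t.
Proof. by rewrite -(chi_periodic (t - _) k) subrK. Qed.

Lemma chi_neq1 (c : R) : 0 < `|c| < N%:R -> chi N c != 1.
Proof.
move=> /andP[c_gt0 c_ltN]; apply/eqP => /(congr1 (@complex.Re R)) /= cos_eq1.
set th := pi * c / N%:R.
have th2 : 2 * pi * c / N%:R = th *+ 2 by rewrite /th mulr2n; ring.
rewrite th2 cos_mulr2n in cos_eq1.
have sin_th : sin `|th| = 0.
  have : sin th ^+ 2 == 0 by rewrite sin2cos2 subr_eq0; apply/eqP; lra.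
  rewrite expf_eq0 /= => /eqP sin0.
  by case: (ger0P th) => _; rewrite ?sinN sin0 ?oppr0.
have th_in : 0 < `|th| < pi.
  have N_gt0R : (0 : R) < N%:R by rewrite ltr0n.
  rewrite /th !normrM (gtr0_norm (@pi_gt0 R)) normfV normr_nat.
  apply/andP; split; first by rewrite !mulr_gt0 ?pi_gt0 ?invr_gt0.
  rewrite -mulrA gtr_pMr ?pi_gt0 // ltr_pdivrMr //; lra.
by have := sin_gt0_pi th_in; rewrite sin_th ltxx.
Qed.

Lemma sum_chi_ord (a b : 'I_N) :
  \sum_(j < N) chi N ((a%:R - b%:R) * j%:R) = if a == b then (N%:R : R[i]) else 0.
Proof.
have [->|ab] := eqVneq a b.
  by under eq_bigr do rewrite subrr mul0r chi0; rewrite sumr_const card_ord.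
under eq_bigr do rewrite chiM_natr.
set w := chi N (a%:R - b%:R).
have wN : w ^+ N = 1.
  by rewrite -chiM_natr mulrBl chi_periodicN -[X in chi N X]add0r chi_periodic chi0.
have w_neq1 : w != 1.
  have aN : (a%:R : R) < N%:R by rewrite ltr_nat.
  have bN : (b%:R : R) < N%:R by rewrite ltr_nat.
  have ab' : (a%:R : R) != b%:R by rewrite eqr_nat.
  have a_ge0 : (0 : R) <= a%:R := ler0n _ _.
  have b_ge0 : (0 : R) <= b%:R := ler0n _ _.
  apply: chi_neq1; case: (ger0P (a%:R - b%:R : R)) => ab_ge0.
    by rewrite lt_def ab_ge0 subr_eq0 ab' /=; lra.
  by apply/andP; split; lra.
have := subrX1 w N; rewrite wN subrr => /esym/eqP.
by rewrite mulf_eq0 subr_eq0 (negPf w_neq1) => /eqP.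
Qed.

Lemma chi_natrB_eqmod (t : R) (a b : nat) :
  a = b %[mod N] -> chi N (t + a%:R - b%:R) = chi N t.
Proof.
move=> ab; rewrite (divn_eq a N) (divn_eq b N) ab !natrD !natrM.
have -> : t + ((a %/ N)%:R * N%:R + (b %% N)%:R) - ((b %/ N)%:R * N%:R + (b %% N)%:R) =
  t + (a %/ N)%:R * N%:R - (b %/ N)%:R * N%:R by ring.
by rewrite chi_periodicN chi_periodic.
Qed.
End Characters.

Section FourierZNd.
Variables (R : realType) (N d : nat).
Hypothesis N_gt0 : (0 < N)%N.
Local Notation pt := (pt N d).
Local Notation Nd := ((N%:R : R[i]) ^+ d).

Lemma Nd_neq0 : Nd != 0.
Proof. by rewrite expf_eq0 pnatr_eq0 negb_and -lt0n N_gt0 orbT. Qed.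

Lemma sum_chi_dotpB (x y : pt) :
  \sum_(m : pt) chi N ((dotp x m)%:R - (dotp y m)%:R : R) = if x == y then Nd else 0.
Proof.
have chi_prod (m : pt) : chi N ((dotp x m)%:R - (dotp y m)%:R : R) =
    \prod_(i < d) chi N (((x i : nat)%:R - (y i : nat)%:R) * (m i : nat)%:R).
  rewrite /dotp !natr_sum -sumrB chi_sum; apply: eq_bigr => i _.
  by rewrite !natrM mulrBl.
rewrite (eq_bigr _ (fun m _ => chi_prod m)).
rewrite -(bigA_distr_bigA (fun (i : 'I_d) (j : 'I_N) =>
   chi N (((x i : nat)%:R - (y i : nat)%:R) * (j : nat)%:R))).
under eq_bigr do rewrite sum_chi_ord //.
have [->|/ffun_neq_exists [i xy_i]] := eqVneq x y.
  by under eq_bigr do rewrite eqxx; rewrite prodr_const card_ord.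
by rewrite (bigD1 i) //= (negPf xy_i) mul0r.
Qed.

Lemma fourier_inversion (h : pt -> R[i]) (x : pt) :
  h x = \sum_(m : pt) chi N ((dotp x m)%:R : R) * fhat h m.
Proof.
rewrite (eq_bigr (fun m => \sum_(y : pt) Nd^-1 * h y *
    chi N ((dotp x m)%:R - (dotp y m)%:R : R))); last first.
  move=> m _; rewrite /fhat mulrCA mulr_sumr mulr_sumr.
  by apply: eq_bigr => y _; rewrite chiD; ring.
rewrite exchange_big /=.
under eq_bigr => y _ do rewrite -mulr_sumr sum_chi_dotpB.
rewrite (bigD1 x) //= eqxx big1 ?addr0; last first.
  by move=> y /negPf; rewrite eq_sym => ->; rewrite mulr0.
by rewrite mulrAC mulVf ?mul1r // Nd_neq0.
Qed.

Definition pt_sub (y x : pt) : pt :=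
  [ffun i => Ordinal (ltn_pmod (y i + (N - x i)) N_gt0)].

Lemma chi_dotp_pt_sub (y x m : pt) :
  chi N (- (dotp m (pt_sub y x))%:R : R) = chi N ((dotp x m)%:R - (dotp y m)%:R : R).
Proof.
set A := dotp m (pt_sub y x); set B := dotp x m; set C := dotp y m.
have ABC : A + B = C %[mod N].
  rewrite /A /B /C /dotp -big_split /= -modn_summ -[in RHS]modn_summ.
  congr (_ %% N)%N; apply: eq_bigr => i _; rewrite ffunE /= -modnDml modnMmr modnDml.
  have -> : (m i * (y i + (N - x i)) + x i * m i = y i * m i + m i * N)%N.
    rewrite mulnDr -addnA [(x i * m i)%N]mulnC -mulnDr subnK ?(ltnW (ltn_ord _)) //.
    by rewrite mulnC.
  by rewrite addnC modnMDl.
have -> : (B%:R - C%:R : R) = - A%:R + (A + B)%:R - C%:R by rewrite natrD; ring.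
by rewrite chi_natrB_eqmod.
Qed.

Lemma pt_sub_neq0 (y x : pt) : y != x -> exists i, (pt_sub y x i : nat) != 0%N.
Proof.
move=> /ffun_neq_exists [i yx_i]; exists i; rewrite ffunE /=.
move: yx_i (ltn_ord (y i)) (ltn_ord (x i)); rewrite -val_eqE /=.
case: (leqP (x i) (y i)) => xy yx y_lt x_lt.
  have -> : (y i + (N - x i) = (y i - x i) + N)%N by lia.
  by rewrite modnDr modn_small; lia.
by rewrite modn_small; lia.
Qed.
End FourierZNd.

Section SparseSpectrum.
Variables (R : realType) (N d : nat).
Hypothesis N_gt0 : (0 < N)%N.
Local Notation pt := (pt N d).
Local Notation Nd := ((N%:R : R[i]) ^+ d).
Variables (S : {set pt}) (h : pt -> R[i]).
Hypothesis fhat_h_out : forall m, m \notin S -> fhat h m = 0.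

Lemma fourier_inversion_spectrum (x : pt) :
  h x = \sum_(m in S) chi N ((dotp x m)%:R : R) * fhat h m.
Proof.
rewrite {1}(fourier_inversion N_gt0) (bigID (mem S)) /= [X in _ + X]big1 ?addr0 //.
by move=> m /fhat_h_out ->; rewrite mulr0.
Qed.

Lemma spectrum_reproducing (x : pt) :
  h x = \sum_(y : pt) h y * fhat (indic R S) (pt_sub N_gt0 y x).
Proof.
rewrite {1}(fourier_inversion N_gt0).
rewrite (eq_bigr (fun m => \sum_(y : pt) h y * (Nd^-1 * (indic R S m *
    chi N ((dotp x m)%:R - (dotp y m)%:R : R))))); last first.
  move=> m _; have -> : fhat h m = indic R S m * fhat h m.
    by rewrite /indic; case: ifPn => [_|/fhat_h_out ->]; rewrite ?mul1r ?mul0r.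
  by rewrite /fhat !mulr_sumr; apply: eq_bigr => y _; rewrite chiD; ring.
rewrite exchange_big /=; apply: eq_bigr => y _.
rewrite -mulr_sumr -mulr_sumr /fhat; congr (_ * (_ * _)); apply: eq_bigr => m _.
by rewrite chi_dotp_pt_sub mulrC.
Qed.

Lemma fhat_indic_pt_sub_self (x : pt) :
  fhat (indic R S) (pt_sub N_gt0 x x) = (dens R S)%:C.
Proof.
rewrite /fhat; under eq_bigr do rewrite chi_dotp_pt_sub subrr chi0 mul1r.
rewrite /indic -big_mkcond sumr_const /dens rmorphM /= fmorphV rmorphXn /=.
by rewrite !rmorph_nat mulr_natr.
Qed.

Variable x0 : pt.
Hypothesis h_max : forall y, `|h y| <= `|h x0|.
Hypothesis h_x0 : h x0 != 0.

Lemma sum_normr_le_supp : \sum_y `|h y| <= #|[set y | h y != 0%R]|%:R * `|h x0|.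
Proof.
rewrite (bigID (mem [set y | h y != 0%R])) /= [X in _ + X]big1; last first.
  by move=> y; rewrite inE negbK => /eqP ->; rewrite normr0.
rewrite addr0; apply: le_trans (ler_sum _ (fun y _ => h_max y)) _.
by rewrite sumr_const mulr_natl.
Qed.

Lemma expn_le_card_spectrum_supp : (N ^ d <= #|S| * #|[set y | h y != 0%R]|)%N.
Proof.
set a := #|[set y | h y != 0%R]|.
have Nd_gt0 : 0 < Nd by rewrite exprn_gt0 // ltr0n.
have fhat_le m : `|fhat h m| <= Nd^-1 * (a%:R * `|h x0|).
  rewrite /fhat normrM normfV (gtr0_norm Nd_gt0) ler_pM2l ?invr_gt0 //.
  apply: le_trans (ler_norm_sum _ _ _) (le_trans _ sum_normr_le_supp).
  by apply: ler_sum => y _; rewrite normrM normr_chi mul1r.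
have : `|h x0| <= #|S|%:R * (Nd^-1 * (a%:R * `|h x0|)).
  rewrite {1}fourier_inversion_spectrum; apply: le_trans (ler_norm_sum _ _ _) _.
  under eq_bigr do rewrite normrM normr_chi mul1r.
  apply: le_trans (ler_sum _ (fun m _ => fhat_le m)) _.
  by rewrite sumr_const [X in _ <= X]mulr_natl.
have hx0_gt0 : 0 < `|h x0| by rewrite normr_gt0.
have -> : #|S|%:R * (Nd^-1 * (a%:R * `|h x0|)) = `|h x0| * ((#|S| * a)%N%:R / Nd).
  by rewrite natrM; ring.
by rewrite ler_pMr // ler_pdivlMr // mul1r -natrX ler_nat.
Qed.

Lemma salem_le_supp (L : R) : 0 <= L -> salem S L ->
  1 - dens R S <= #|[set y | h y != 0%R]|%:R * (L * (N%:R ^+ d)^-1 * Num.sqrt #|S|%:R).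
Proof.
move=> L_ge0 S_salem.
set a := #|[set y | h y != 0%R]|; set c := L * _ * _.
set K := fun y => fhat (indic R S) (pt_sub N_gt0 y x0).
have c_ge0 : 0 <= c%:C by rewrite lecR !mulr_ge0 ?sqrtr_ge0 ?invr_ge0 ?exprn_ge0.
have K_le y : y != x0 -> `|K y| <= c%:C.
  by move=> yx0; apply: S_salem; apply: pt_sub_neq0.
have hx0_dens : h x0 * (1 - (dens R S)%:C) = \sum_(y | y != x0) h y * K y.
  have := spectrum_reproducing x0; rewrite (bigD1 x0) //= fhat_indic_pt_sub_self => reproduce.
  by rewrite mulrBr mulr1 {1}reproduce [X in X - _]addrC addrK.
have sum_le : \sum_(y | y != x0) `|h y * K y| <= \sum_y `|h y| * c%:C.
  rewrite [X in _ <= X](bigD1 x0) //=; apply: ler_wpDl.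
    exact: mulr_ge0 (normr_ge0 _) c_ge0.
  by apply: ler_sum => y yx0; rewrite normrM ler_wpM2l ?K_le.
have : `|h x0| * `|(1 - dens R S)%:C| <= `|h x0| * (a%:R * c%:C).
  rewrite rmorphB rmorph1 -normrM hx0_dens.
  apply: le_trans (ler_norm_sum _ _ _) (le_trans sum_le _).
  rewrite -mulr_suml mulrCA mulrA; apply: ler_wpM2r => //.
  exact: sum_normr_le_supp.
rewrite ler_pM2l ?normr_gt0 // => dens_le.
rewrite -lecR [X in _ <= X]rmorphM rmorph_nat.
apply: real_ler_normlW dens_le.
by apply/complex_realP; exists (1 - dens R S).
Qed.
End SparseSpectrum.

Lemma powR34_sqr (R : realType) (s : R) :
  0 < s -> (s `^ (3%:R / 4%:R)) ^+ 2 = s * Num.sqrt s.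
Proof.
move=> s_gt0; have s_neq0 : (s != 0) by rewrite gt_eqF.
rewrite expr2 -powRD ?s_neq0 ?implybT //.
have -> : 3%:R / 4%:R + 3%:R / 4%:R = 1 + 2^-1 :> R by field.
by rewrite powRD ?s_neq0 ?implybT // powRr1 ?ltW // powR12_sqrt ?ltW.
Qed.

(* Read e = |E|, s = |S|, a = |supp h|, n = N^d, q = 1 - dens S and P = s^(3/4). *)
Lemma uncertainty_salem_threshold (R : rcfType) (e s a n q L P : R) :
  0 < L -> 0 < n -> 0 <= a -> 0 <= e -> 0 <= P -> P ^+ 2 = s * Num.sqrt s ->
  n <= s * a -> q <= a * (L * n^-1 * Num.sqrt s) -> a <= 2 * e ->
  2^-1 * n * Num.sqrt (q / L) <= e * P.
Proof.
move=> L_gt0 n_gt0 a_ge0 e_ge0 P_ge0 P2 n_le q_le a_le.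
have [qL_le0 | qL_gt0] := lerP (q / L) 0.
  by rewrite ler0_sqrtr // mulr0 mulr_ge0.
set rs := Num.sqrt s in P2 q_le *.
have rs_ge0 : 0 <= rs := sqrtr_ge0 s.
have s_ge0 : 0 <= s by nra.
have nqL : n * (q / L) <= a * rs.
  rewrite mulrA ler_pdivrMr //.
  have -> : a * rs * L = n * (a * (L * n^-1 * rs)) by field; rewrite gt_eqF.
  by apply: ler_wpM2l q_le; exact: ltW.
have sq_le : (2^-1 * n * Num.sqrt (q / L)) ^+ 2 <= (e * P) ^+ 2.
  rewrite !exprMn P2 sqr_sqrtr ?(ltW qL_gt0) // -/rs.
  have n2q_le : n ^+ 2 * (q / L) <= n * a * rs.
    by rewrite expr2 -mulrA -[n * a * rs]mulrA ler_wpM2l ?(ltW n_gt0).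
  have a_le_2e : n * a * rs <= n * (2 * e) * rs.
    by rewrite ler_wpM2r // ler_wpM2l ?(ltW n_gt0).
  have n_le_2se : n * (2 * e) * rs <= (2 * s * e) * (2 * e) * rs.
    by rewrite ler_wpM2r // ler_wpM2r ?mulr_ge0 //; nra.
  have -> : e ^+ 2 * (s * rs) = 2^-1 ^+ 2 * ((2 * s * e) * (2 * e) * rs) by field.
  rewrite -mulrA ler_wpM2l ?exprn_ge0 ?invr_ge0 //.
  exact: le_trans n2q_le (le_trans a_le_2e n_le_2se).
by rewrite -ler_sqr // nnegrE ?mulr_ge0 ?sqrtr_ge0 ?invr_ge0 ?(ltW n_gt0).
Qed.

Theorem theorem4 (R : realType) (N d : nat) (hN : (2 <= N)%N) (hd : (1 <= d)%N)
  (S : {set pt N d}) (L : R) (hS0 : S != set0) (hL : 0 < L) (hSalem : salem S L)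
  (E : {set pt N d}) (f : pt N d -> R[i])
  (hsupp : forall x, x \notin E -> f x = 0)
  (hsize : #|E|%:R * (#|S|%:R `^ (3%:R / 4%:R)) <
           2^-1 * N%:R ^+ d * Num.sqrt ((1 - dens R S) / L)) :
  forall g : pt N d -> R[i],
    (#|[set x | g x != 0%R]| <= #|E|)%N ->
    (forall m, m \notin S -> fhat g m = fhat f m) ->
    forall x, g x = f x.
Proof.
move=> g g_sparse fhat_gf x; apply/eqP; apply: contraT => gfx.
have N_gt0 : (0 < N)%N := ltnW hN.
set h := fun y => g y - f y.
have fhat_h_out m : m \notin S -> fhat h m = 0.
  by move=> mS; rewrite fhatB fhat_gf // subrr.
have [x0 h_max] := exists_real_max x (fun y => normr_real (h y)).
have h_x0 : h x0 != 0.
  by apply: contraNneq gfx => hx0; move: (h_max x); rewrite hx0 normr0 normr_le0 subr_eq0.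
have supp_h : (#|[set y | h y != 0%R]| <= 2 * #|E|)%N.
  apply: leq_trans (card_supp_subr g f) _; rewrite mul2n -addnn leq_add //.
  apply/subset_leq_card/subsetP => y; rewrite inE; apply: contraR => yE.
  by rewrite hsupp.
have S_gt0 : (0 : R) < #|S|%:R by rewrite ltr0n card_gt0.
suff : 2^-1 * N%:R ^+ d * Num.sqrt ((1 - dens R S) / L) <=
    #|E|%:R * (#|S|%:R `^ (3%:R / 4%:R)) by rewrite leNgt hsize.
have uncertainty := expn_le_card_spectrum_supp N_gt0 fhat_h_out h_max h_x0.
have salem_h := salem_le_supp N_gt0 fhat_h_out h_max h_x0 (ltW hL) hSalem.
apply: (uncertainty_salem_threshold hL _ _ _ (powR_ge0 _ _) (powR34_sqr S_gt0) _ salem_h).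
- by rewrite exprn_gt0 // ltr0n.
- exact: ler0n.
- exact: ler0n.
- by rewrite -natrX -natrM ler_nat.
- by rewrite -natrM ler_nat.
Qed.
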